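(* Let $\mathcal{M}$ be a matroid with set of bases $\mathcal{B}$ and let $d\geq 2$. If $\mathcal{M}$ has a minor $\mathcal{M}'$ isomorphic to the uniform matroid $\mathcal{U}_{d,2d}$, then there exist $B_1,B_2\in\mathcal{B}$ such that $\Delta_{\{B_1,B_2\}}=\binom{2d-1}{d}$.
   Context: $\mathcal{U}_{r,n}$ denotes the uniform matroid of rank $r$ on $n$ elements. A minor of $\mathcal{M}$ is a matroid $(\mathcal{M}\setminus A)/C$ with $A,C$ disjoint subsets of the ground set. For bases $B_1,B_2$ of $\mathcal{M}$, $\Delta_{\{B_1,B_2\}}$ is the number of unordered pairs $\{D_1,D_2\}$ with $D_1,D_2\in\mathcal{B}$ such that $D_1\cup D_2=B_1\cup B_2$ as multisets. *)

From mathcomp Require Import all_boot.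
Set Implicit Arguments. Unset Strict Implicit. Unset Printing Implicit Defensive.

Section Matroid.
Variable E : finType.

Definition is_matroid (B : {set {set E}}) : Prop :=
  B != set0 /\
  forall B1 B2, B1 \in B -> B2 \in B -> forall x, x \in B1 :\: B2 ->
    exists2 y, y \in B2 :\: B1 & (B1 :\ x) :|: [set y] \in B.

Definition indep (B : {set {set E}}) (I : {set E}) : bool :=
  [exists B0 in B, I \subset B0].

Definition rank (B : {set {set E}}) (X : {set E}) : nat :=
  \max_(I : {set E} | indep B I && (I \subset X)) #|I|.

(* Bases of the minor (M \ A) / C, on the ground set E \ (A u C)
   (A, C disjoint): X is a basis iff X is a subset of the ground set that is
   independent in the minor and spanning in the minor, where the minor has
   rank function r'(Y) = r(Y u C) - r(C). Note (E\(A u C)) u C = E \ A. *)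
Definition minor_basis (B : {set {set E}}) (A C X : {set E}) : bool :=
  [&& X \subset ~: (A :|: C),
      rank B (X :|: C) - rank B C == #|X| &
      rank B (X :|: C) == rank B (~: A)].

(* Delta_{B1,B2}: number of unordered pairs {D1,D2} of bases with
   D1 + D2 = B1 + B2 as multisets. An unordered pair is represented by
   the set [set D1; D2]. *)
Definition multiset_union_eq (D1 D2 B1 B2 : {set E}) : bool :=
  [forall e, ((e \in D1) + (e \in D2) == (e \in B1) + (e \in B2))%N].

Definition Delta (B : {set {set E}}) (B1 B2 : {set E}) : nat :=
  #|[set P : {set {set E}} | [exists D1 in B, exists D2 in B,
       (P == [set D1; D2]) && multiset_union_eq D1 D2 B1 B2]]|.

End Matroid.

Definition uniform_bases (r n : nat) : {set {set 'I_n}} :=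
  [set Y : {set 'I_n} | #|Y| == r].

Definition has_uniform_minor (E : finType) (B : {set {set E}}) (r n : nat) : Prop :=
  exists (A C : {set E}) (f : 'I_n -> E),
    [/\ [disjoint A & C], injective f,
        f @: [set: 'I_n] = ~: (A :|: C) &
        forall Y : {set 'I_n}, minor_basis B A C (f @: Y) = (Y \in uniform_bases r n)].

From mathcomp Require Import all_boot zify.
Set Implicit Arguments. Unset Strict Implicit. Unset Printing Implicit Defensive.

(* Lift the uniform minor to M: take a basis I of C and a basis D0 of M
   containing I :|: X0 for one d-subset X0 of the minor's ground set G. Since
   every d-subset X of G is a basis of the minor, I :|: X is independent and
   spans the rank of ~: A, so any basis K of M containing I :|: X inside
   I :|: X :|: D0 satisfies K :\: A = I :|: X and, by counting,
   K :&: A = D0 :&: A. Hence T := I :|: (D0 :&: A) is disjoint from G and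
   T :|: X is a basis for every d-subset X of G. For B1 = T :|: X0 and
   B2 = T :|: (G :\: X0) the multiset sum is 2T + G, and the pairs of bases
   with that sum are exactly the {T :|: X, T :|: (G :\: X)} with #|X| = d;
   these unordered pairs are counted by the d-subsets of G missing a fixed
   element, i.e. by 'C(2d - 1, d). *)

Section MatroidBases.
Variables (E : finType) (B : {set {set E}}).
Hypothesis matroidB : is_matroid B.

Lemma basis_exchange (B1 B2 : {set E}) x :
  B1 \in B -> B2 \in B -> x \in B1 -> x \notin B2 ->
  exists2 y, (y \in B2) && (y \notin B1) & (B1 :\ x) :|: [set y] \in B.
Proof.
case: matroidB => _ exchB B1B B2B xB1 xB2.
have [|y] := exchB B1 B2 B1B B2B x; first by rewrite inE xB1 xB2.
by rewrite inE andbC => yB2 exB; exists y.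
Qed.

Lemma card_bases (B1 B2 : {set E}) : B1 \in B -> B2 \in B -> #|B1| = #|B2|.
Proof.
elim: {B1}#|B1 :\: B2| {-2}B1 (erefl #|B1 :\: B2|) => [|n IHn] B1 dB1 B1B B2B.
  have sB12 : B1 \subset B2 by rewrite -setD_eq0 -cards_eq0 dB1.
  have sB21 : B2 \subset B1.
    apply/subsetP=> x xB2; apply/negPn/negP=> xB1.
    have [y /andP [yB1 yB2] _] := basis_exchange B2B B1B xB2 xB1.
    by rewrite (subsetP sB12 y yB1) in yB2.
  by apply/eqP; rewrite eqn_leq !subset_leq_card.
have [x] : exists x, x \in B1 :\: B2 by apply/card_gt0P; rewrite dB1.
rewrite inE => /andP [xB2 xB1].
have [y /andP [yB2 yB1] B1'B] := basis_exchange B1B B2B xB1 xB2.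
have cardB1' : #|(B1 :\ x) :|: [set y]| = #|B1|.
  by rewrite setUC cardsU1 !inE negb_and yB1 orbT (cardsD1 x B1) xB1.
rewrite -cardB1'; apply: IHn => //.
have -> : ((B1 :\ x) :|: [set y]) :\: B2 = (B1 :\: B2) :\ x.
  apply/setP=> z; rewrite !inE.
  by case: (z =P y) => [->|_]; [rewrite yB2 (negbTE yB1) andbF | rewrite orbF andbCA].
by apply/eqP; rewrite -eqSS -dB1 (cardsD1 x (B1 :\: B2)) !inE xB1 xB2.
Qed.

Lemma indepS (I J : {set E}) : J \subset I -> indep B I -> indep B J.
Proof.
move=> sJI /exists_inP [B0 B0B sIB0]; apply/exists_inP; exists B0 => //.
exact: subset_trans sIB0.
Qed.

Lemma basis_indep (B0 : {set E}) : B0 \in B -> indep B B0.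
Proof. by move=> B0B; apply/exists_inP; exists B0. Qed.

Lemma indep_basis (B0 K : {set E}) : B0 \in B -> indep B K -> #|B0| <= #|K| -> K \in B.
Proof.
move=> B0B /exists_inP [B1 B1B sKB1] leB0K.
suff /eqP -> : K == B1 by [].
by rewrite eqEcard sKB1 (card_bases B1B B0B).
Qed.

Lemma indep_extend_basis (J D : {set E}) :
  indep B J -> D \in B -> exists2 K, K \in B & (J \subset K) && (K \subset J :|: D).
Proof.
move=> /exists_inP [C CB sJC] DB.
elim: {C}#|C :\: (J :|: D)| {-2}C (erefl #|C :\: (J :|: D)|) CB sJC => [|n IHn] C dC CB sJC.
  by exists C; rewrite // sJC -setD_eq0 -cards_eq0 dC.
have [y yCJD] : exists y, y \in C :\: (J :|: D) by apply/card_gt0P; rewrite dC.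
move: (yCJD); rewrite !inE negb_or => /andP [/andP [yJ yD] yC].
have [z /andP [zD zC] C'B] := basis_exchange CB DB yC yD.
apply: (IHn _ _ C'B).
  have -> : ((C :\ y) :|: [set z]) :\: (J :|: D) = (C :\: (J :|: D)) :\ y.
    apply/setP=> w; rewrite !inE.
    by case: (w =P z) => [->|_]; [rewrite zD !orbT andbF | rewrite orbF andbCA].
  by apply/eqP; rewrite -eqSS -dC (cardsD1 y (C :\: _)) yCJD.
apply/subsetP=> w wJ; rewrite !inE (subsetP sJC w wJ) andbT.
by apply/orP; left; apply: contraNneq yJ => <-.
Qed.

Lemma indep_augment (I1 I2 : {set E}) :
  indep B I1 -> indep B I2 -> #|I1| < #|I2| ->
  exists2 x, x \in I2 :\: I1 & indep B (x |: I1).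
Proof.
move=> indI1 indI2 ltI12.
apply/exists_inP/contraT => /exists_inPn noAug.
have {}noAug x : x \in I2 -> x \notin I1 -> ~~ indep B (x |: I1).
  by move=> xI2 xI1; apply: noAug; rewrite inE xI1 xI2.
have [B1 B1B sI1B1] := exists_inP indI1.
have [B2 B2B /andP [sI2B2 sB2]] := indep_extend_basis indI2 B1B.
have sI21 : I2 :\: I1 \subset B2 :\: B1.
  apply/subsetP=> y; rewrite !inE => /andP [yI1 yI2]; rewrite (subsetP sI2B2 y yI2).
  apply/andP; split=> //; apply: contraNN (noAug y yI2 yI1) => yB1.
  by apply/exists_inP; exists B1; rewrite // subUset sub1set yB1.
have sB12 : B1 :\: B2 \subset I1 :\: I2.
  apply/subsetP=> x; rewrite !inE => /andP [xB2 xB1].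
  rewrite (contra (subsetP sI2B2 x)) //=; apply/negPn/negP => xI1.
  have [y /andP [yB2 yB1] B1'B] := basis_exchange B1B B2B xB1 xB2.
  have yI2 : y \in I2 by move: (subsetP sB2 y yB2); rewrite inE (negbTE yB1) orbF.
  have yI1 : y \notin I1 := contra (subsetP sI1B1 y) yB1.
  apply: (negP (noAug y yI2 yI1)); apply/exists_inP; exists ((B1 :\ x) :|: [set y]) => //.
  by rewrite [_ :|: [set y]]setUC setUS // subsetD1 sI1B1.
have cardB12 := card_bases B1B B2B.
have := subset_leq_card sI21; have := subset_leq_card sB12.
have := cardsID B2 B1; have := cardsID B1 B2; have := cardsID I2 I1; have := cardsID I1 I2.
rewrite (setIC B2) (setIC I2); lia.
Qed.

Lemma indep_extend (I J : {set E}) :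
  indep B I -> indep B J -> #|I| <= #|J| ->
  exists K : {set E}, [/\ I \subset K, K \subset I :|: J, indep B K & #|K| = #|J|].
Proof.
elim: {I}(#|J| - #|I|) {-2}I (erefl (#|J| - #|I|)) => [|n IHn] I dIJ indI indJ leIJ.
  by exists I; split; rewrite ?subsetUl //; lia.
have [x] := indep_augment indI indJ (ltac:(lia) : #|I| < #|J|).
rewrite inE => /andP [xI xJ] indxI.
have cardxI : #|x |: I| = #|I|.+1 by rewrite cardsU1 xI.
have [K [sxIK sKxIJ indK cardK]] := IHn (x |: I) ltac:(lia) indxI indJ ltac:(lia).
exists K; split=> //; first exact: subset_trans (subsetUr _ _) sxIK.
apply: subset_trans sKxIJ _.
by rewrite !subUset sub1set inE xJ orbT subsetUl subsetUr.
Qed.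

Lemma card_indep_leq_rank (I X : {set E}) :
  indep B I -> I \subset X -> #|I| <= rank B X.
Proof. by move=> indI sIX; apply: leq_bigmax_cond; rewrite indI sIX. Qed.

Lemma rank_attained (X : {set E}) :
  exists I, [/\ indep B I, I \subset X & #|I| = rank B X].
Proof.
have [B0 B0B] := set0Pn _ matroidB.1.
pose candidates := [pred I : {set E} | indep B I && (I \subset X)].
have : 0 < #|candidates|.
  apply/card_gt0P; exists set0; rewrite inE /= sub0set andbT.
  by apply/exists_inP; exists B0; rewrite ?sub0set.
case/(eq_bigmax_cond (fun I : {set E} => #|I|)) => I; rewrite inE => /andP [indI sIX] rankX.
by exists I; split; rewrite // /rank rankX.
Qed.

Lemma rank_subset (X Y : {set E}) : X \subset Y -> rank B X <= rank B Y.
Proof.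
move=> sXY; have [I [indI sIX <-]] := rank_attained X.
exact: card_indep_leq_rank indI (subset_trans sIX sXY).
Qed.

Section UniformMinorLift.
Variables (A C : {set E}) (d : nat).
Hypothesis disjAC : [disjoint A & C].
Let G := ~: (A :|: C).
Hypothesis minor_basis_uniform :
  forall X : {set E}, X \subset G -> #|X| = d -> minor_basis B A C X.
Variable X0 : {set E}.
Hypotheses (sX0G : X0 \subset G) (cardX0 : #|X0| = d).

Lemma rank_setU_minor (X : {set E}) :
  X \subset G -> #|X| = d -> rank B (X :|: C) = rank B C + d.
Proof.
move=> sXG cardX; have /and3P [_ /eqP rankXC _] := minor_basis_uniform sXG cardX.
by rewrite -cardX -rankXC subnKC // rank_subset ?subsetUr.
Qed.

Lemma rank_setCA_minor : rank B (~: A) = rank B C + d.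
Proof.
have /and3P [_ _ /eqP <-] := minor_basis_uniform sX0G cardX0.
exact: rank_setU_minor.
Qed.

Section BasisOfC.
Variable I : {set E}.
Hypotheses (indI : indep B I) (sIC : I \subset C) (cardI : #|I| = rank B C).

Lemma card_setU_minor (X : {set E}) :
  X \subset G -> #|X| = d -> #|I :|: X| = rank B C + d.
Proof.
move=> sXG cardX; rewrite cardsU -cardI -cardX.
suff /eqP -> : I :&: X == set0 by rewrite cards0 subn0.
by rewrite setI_eq0 (disjointW sIC sXG) // disjoints_subset setCK subsetUr.
Qed.

Lemma subset_setCA_minor (X : {set E}) : X \subset G -> I :|: X \subset ~: A.
Proof.
move=> sXG; rewrite subUset (subset_trans sIC) /=; last first.
  by rewrite -disjoints_subset disjoint_sym.
by apply: subset_trans sXG _; rewrite setCS subsetUl.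
Qed.

Lemma indep_setU_minor (X : {set E}) :
  X \subset G -> #|X| = d -> indep B (I :|: X).
Proof.
move=> sXG cardX.
have [W [indW sWXC cardW]] := rank_attained (X :|: C).
have [|K [sIK sKIW indK cardK]] := indep_extend indI indW.
  by rewrite cardI cardW rank_setU_minor ?leq_addr.
have cardKC : #|K :&: C| <= rank B C.
  exact: card_indep_leq_rank (indepS (subsetIl _ _) indK) (subsetIr _ _).
have sKCX : K :\: C \subset X.
  apply: subset_trans (setSD C sKIW) _; rewrite setDUl subUset.
  have /eqP -> : I :\: C == set0 by rewrite setD_eq0.
  by rewrite sub0set (subset_trans (setSD C sWXC)) // setDUl setDv setU0 subsetDl.
have eqKCX : K :\: C = X.
  apply/eqP; rewrite eqEcard sKCX cardX -(leq_add2l #|K :&: C|) cardsID.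
  by rewrite cardK cardW rank_setU_minor // leq_add2r.
by apply: indepS indK; rewrite subUset sIK -eqKCX subsetDl.
Qed.

Lemma indep_setDA_minor (X K : {set E}) :
  X \subset G -> #|X| = d -> indep B K -> I :|: X \subset K -> K :\: A = I :|: X.
Proof.
move=> sXG cardX indK sIXK; apply/esym/eqP.
rewrite eqEcard setDE subsetI sIXK subset_setCA_minor //= -setDE.
rewrite card_setU_minor // -rank_setCA_minor.
exact: card_indep_leq_rank (indepS (subsetDl _ _) indK) (subsetDr _ _).
Qed.

Lemma card_basis_setIA_minor (X D : {set E}) :
  X \subset G -> #|X| = d -> D \in B -> I :|: X \subset D ->
  #|D :&: A| = #|D| - (rank B C + d).
Proof.
move=> sXG cardX DB sIXD; have := cardsID A D.
rewrite (indep_setDA_minor sXG cardX (basis_indep DB) sIXD) card_setU_minor //.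
by move=> <-; rewrite addnK.
Qed.

Lemma basis_lift_minor :
  exists T : {set E}, [disjoint T & G] /\
    forall X : {set E}, X \subset G -> #|X| = d -> T :|: X \in B.
Proof.
have [D0 D0B sIX0D0] := exists_inP (indep_setU_minor sX0G cardX0).
exists (I :|: (D0 :&: A)); split.
  rewrite disjoints_subset setCK subUset (subset_trans sIC) ?subsetUr //=.
  exact: subset_trans (subsetIr _ _) (subsetUl _ _).
move=> X sXG cardX.
have [|K [sIXK sKIXD0 indK cardK]] :=
  indep_extend (indep_setU_minor sXG cardX) (basis_indep D0B).
  rewrite card_setU_minor // -(card_setU_minor sX0G cardX0).
  exact: subset_leq_card sIX0D0.
have KB : K \in B by apply: indep_basis D0B indK _; rewrite cardK.
have KA : K :&: A = D0 :&: A.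
  apply/eqP; rewrite eqEcard (card_basis_setIA_minor sXG cardX KB sIXK).
  rewrite (card_basis_setIA_minor sX0G cardX0 D0B sIX0D0) (card_bases KB D0B) leqnn andbT.
  apply/subsetP=> w; rewrite !inE => /andP [wK wA]; rewrite wA andbT.
  have /setUP [wIX|//] := subsetP sKIXD0 w wK.
  by have := subsetP (subset_setCA_minor sXG) w wIX; rewrite inE wA.
by rewrite -KA -setUA setUCA -(indep_setDA_minor sXG cardX indK sIXK) setID.
Qed.
End BasisOfC.
End UniformMinorLift.

Section UniformLiftDelta.
Variables (T G X0 : {set E}) (d : nat) (f0 : E).
Hypotheses (disjTG : [disjoint T & G]) (cardG : #|G| = 2 * d) (f0G : f0 \in G).
Hypotheses (sX0G : X0 \subset G) (cardX0 : #|X0| = d).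
Hypothesis liftT : forall X : {set E}, X \subset G -> #|X| = d -> T :|: X \in B.

Definition complementary_pair (X : {set E}) : {set {set E}} :=
  [set T :|: X; T :|: (G :\: X)].

(* Each unordered pair {X, G :\: X} is represented by its member avoiding f0. *)
Let draws := [set X : {set E} | X \subset G :\ f0 & #|X| == d].

Lemma setIU_lift (X : {set E}) : X \subset G -> (T :|: X) :&: G = X.
Proof. by move=> sXG; rewrite setIUl (disjoint_setI0 disjTG) set0U; apply/setIidPl. Qed.

Lemma card_setU_lift (X : {set E}) : X \subset G -> #|T :|: X| = #|T| + #|X|.
Proof.
move=> sXG; rewrite cardsU (disjoint_setI0 (disjointWr sXG disjTG)).
by rewrite cards0 subn0.
Qed.

Lemma basis_lift_complement (X : {set E}) :
  X \subset G -> #|X| = d -> T :|: (G :\: X) \in B.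
Proof.
move=> sXG cardX; apply: liftT; first exact: subsetDl.
by rewrite cardsDS // cardG cardX mul2n -addnn addnK.
Qed.

Lemma in_setU_complementary (X : {set E}) e : X \subset G ->
  ((e \in T :|: X) + (e \in T :|: (G :\: X)) = (e \in T) + (e \in T) + (e \in G))%N.
Proof.
move=> /subsetP sXG.
have TG : (e \in T) ==> (e \notin G) by apply/implyP => /(disjointFr disjTG) ->.
have XG : (e \in X) ==> (e \in G) by apply/implyP/sXG.
by move: TG XG; rewrite !inE; case: (e \in T); case: (e \in G); case: (e \in X).
Qed.

Lemma multiset_split_lift (D1 D2 : {set E}) :
  (forall e, ((e \in D1) + (e \in D2) = (e \in T) + (e \in T) + (e \in G))%N) ->
  D1 = T :|: (D1 :&: G) /\ D2 = T :|: (G :\: (D1 :&: G)).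
Proof.
move=> sumD; split; apply/setP => e; have := sumD e.
all: have TG : (e \in T) ==> (e \notin G) by apply/implyP => /(disjointFr disjTG) ->.
all: move: TG; rewrite !inE.
all: by case: (e \in D1); case: (e \in D2); case: (e \in T); case: (e \in G).
Qed.

Lemma complementary_pair_avoiding (D1 D2 : {set E}) :
  D1 \in B -> f0 \notin D1 ->
  (forall e, ((e \in D1) + (e \in D2) = (e \in T) + (e \in T) + (e \in G))%N) ->
  D1 :&: G \in draws /\ [set D1; D2] = complementary_pair (D1 :&: G).
Proof.
move=> D1B f0D1 /multiset_split_lift [D1E D2E].
split; last by rewrite /complementary_pair -D1E -D2E.
rewrite inE; apply/andP; split.
  apply/subsetP => w; rewrite !inE => /andP [wD1 ->]; rewrite andbT.
  by apply: contraNneq f0D1 => <-.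
have := card_bases D1B (liftT sX0G cardX0).
by rewrite {1}D1E !card_setU_lift ?subsetIr // cardX0 => /addnI ->.
Qed.

Lemma complementary_pair_inj : {in draws &, injective complementary_pair}.
Proof.
move=> X Y; rewrite !inE => /andP [sXGf _] /andP [sYGf _] eqXY.
have sXG := subset_trans sXGf (subD1set G f0).
have sYG := subset_trans sYGf (subD1set G f0).
have /set2P [eTXY | eTXGY] : T :|: X \in complementary_pair Y by rewrite -eqXY set21.
  by rewrite -(setIU_lift sXG) eTXY setIU_lift.
have eXGY : X = G :\: Y by rewrite -(setIU_lift sXG) eTXGY setIU_lift ?subsetDl.
have f0nG (Z : {set E}) : Z \subset G :\ f0 -> f0 \notin Z.
  by move=> /subsetP sZ; apply/negP => /sZ; rewrite !inE eqxx.
by move: (f0nG X sXGf); rewrite eXGY !inE f0G (negbTE (f0nG Y sYGf)).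
Qed.

Lemma multiset_union_lift (D1 D2 : {set E}) :
  reflect (forall e, ((e \in D1) + (e \in D2) = (e \in T) + (e \in T) + (e \in G))%N)
          (multiset_union_eq D1 D2 (T :|: X0) (T :|: (G :\: X0))).
Proof.
apply: (iffP forallP) => sumD e; have := sumD e;
  by rewrite in_setU_complementary // => /eqP.
Qed.

Lemma Delta_lift_pairs :
  [set P : {set {set E}} | [exists D1 in B, exists D2 in B,
     (P == [set D1; D2]) && multiset_union_eq D1 D2 (T :|: X0) (T :|: (G :\: X0))]]
  = complementary_pair @: draws.
Proof.
apply/setP => P; rewrite inE; apply/idP/imsetP.
  case/exists_inP => D1 D1B /exists_inP [D2 D2B /andP [/eqP -> /multiset_union_lift sumD]].
  have [f0D1 | f0D1] := boolP (f0 \in D1); last first.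
    by have [] := complementary_pair_avoiding D1B f0D1 sumD; exists (D1 :&: G).
  have f0D2 : f0 \notin D2.
    have := sumD f0; rewrite f0D1 f0G (disjointFl disjTG f0G).
    by case: (f0 \in D2).
  have sumD' e : ((e \in D2) + (e \in D1) = (e \in T) + (e \in T) + (e \in G))%N.
    by rewrite addnC sumD.
  have [] := complementary_pair_avoiding D2B f0D2 sumD'.
  by exists (D2 :&: G); rewrite // setUC.
case=> X; rewrite inE => /andP [sXGf /eqP cardX] ->.
have sXG := subset_trans sXGf (subD1set G f0).
apply/exists_inP; exists (T :|: X); first exact: liftT.
apply/exists_inP; exists (T :|: (G :\: X)); first exact: basis_lift_complement.
rewrite eqxx; apply/multiset_union_lift => e.
exact: in_setU_complementary.
Qed.

Lemma Delta_lift : Delta B (T :|: X0) (T :|: (G :\: X0)) = 'C((2 * d).-1, d).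
Proof.
rewrite /Delta Delta_lift_pairs (card_in_imset complementary_pair_inj) cards_draws.
by rewrite -cardG (cardsD1 f0 G) f0G.
Qed.
End UniformLiftDelta.
End MatroidBases.

Lemma exists_subset_card (T : finType) (S : {set T}) k :
  k <= #|S| -> exists2 X : {set T}, X \subset S & #|X| = k.
Proof.
rewrite -bin_gt0 -cards_draws => /card_gt0P [X].
by rewrite inE => /andP [sXS /eqP cardX]; exists X.
Qed.

Lemma uniform_minor_subsets (E : finType) (B : {set {set E}}) r n :
  has_uniform_minor B r n ->
  exists A C : {set E}, [/\ [disjoint A & C], #|~: (A :|: C)| = n &
    forall X : {set E}, X \subset ~: (A :|: C) -> #|X| = r -> minor_basis B A C X].
Proof.
move=> [A [C [f [disjAC injf imf minorf]]]]; exists A, C; split=> //.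
  by rewrite -imf (card_imset _ injf) cardsT card_ord.
move=> X sXG cardX.
have imX : f @: (f @^-1: X) = X.
  apply/setP => e; apply/imsetP/idP => [[i] | eX]; first by rewrite inE => ? ->.
  have /imsetP [i _ eE] : e \in f @: [set: 'I_n] by rewrite imf (subsetP sXG).
  by exists i; rewrite // inE -eE.
by rewrite -imX minorf inE -(card_imset _ injf) imX cardX.
Qed.

Theorem proposition3p3 (E : finType) (B : {set {set E}}) (d : nat) :
  is_matroid B -> 2 <= d -> has_uniform_minor B d (2 * d) ->
  exists B1, exists2 B2, B1 \in B /\ B2 \in B & Delta B B1 B2 = 'C((2 * d).-1, d).
Proof.
move=> matroidB d_ge2 /uniform_minor_subsets [A [C [disjAC cardG minorB]]].
set G := ~: (A :|: C) in cardG minorB.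
have [X0 sX0G cardX0] : exists2 X0 : {set E}, X0 \subset G & #|X0| = d.
  by apply: exists_subset_card; rewrite cardG; lia.
have [f0 f0G] : exists f0, f0 \in G by apply/card_gt0P; lia.
have [I [indI sIC cardI]] := rank_attained matroidB C.
have [T [disjTG liftT]] :=
  basis_lift_minor matroidB disjAC minorB sX0G cardX0 indI sIC cardI.
exists (T :|: X0), (T :|: (G :\: X0)).
  by split; [exact: liftT | exact: (basis_lift_complement cardG)].
exact: (Delta_lift matroidB disjTG cardG f0G).
Qed.
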